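(* Let $G$ be a non-complete double-critical $k$-chromatic graph and let $x\in V(G)$ with $\deg_G(x)=k+1$. Then every component of the complement $\overline{G_x}$ is either an isolated vertex or a cycle, there is at least one cycle component, and every cycle component has length at least $5$.
   Context: All graphs are finite and simple. A graph $G$ is (vertex-)critical if $\chi(G-v)<\chi(G)$ for every vertex $v\in V(G)$. A critical graph $G$ is double-critical if $\chi(G-x-y)\le\chi(G)-2$ for every edge $xy\in E(G)$. For a vertex $x$, $G_x:=G[N(x)]$ denotes the subgraph induced by the neighbourhood of $x$, and $\overline{G_x}$ its complement graph. *)

From mathcomp Require Import all_boot.
Set Implicit Arguments. Unset Strict Implicit. Unset Printing Implicit Defensive.

Record sgraph (T : finType) := SGraph {
  adj : rel T;
  adj_sym : symmetric adj;
  adj_irrefl : irreflexive adj }.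

Section Graphs.
Variables (T : finType) (G : sgraph T).

Definition colorable (S : {set T}) (k : nat) : bool :=
  [exists f : {ffun T -> 'I_k},
     [forall x in S, forall y in S, adj G x y ==> (f x != f y)]].

Lemma colorable_card (S : {set T}) : exists k, colorable S k.
Proof.
exists #|T|; apply/existsP; exists [ffun x => enum_rank x].
apply/forallP => x; apply/implyP => _; apply/forallP => y; apply/implyP => _.
apply/implyP => hxy; rewrite !ffunE.
apply/negP => /eqP /enum_rank_inj exy; subst y.
by rewrite adj_irrefl in hxy.
Qed.

Definition chi (S : {set T}) : nat := ex_minn (colorable_card S).

Definition chromatic : nat := chi [set: T].

Definition critical : Prop :=
  forall v : T, chi (~: [set v]) < chromatic.

Definition double_critical : Prop :=
  critical /\
  forall x y : T, adj G x y -> chi (~: [set x; y]) <= chromatic - 2.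

Definition complete : Prop := forall x y : T, x != y -> adj G x y.

Definition nbhd (x : T) : {set T} := [set y | adj G x y].

Definition deg (x : T) : nat := #|nbhd x|.

(* adjacency of the complement of G_x (on vertex set N(x)) *)
Definition co_adj (x : T) : rel T :=
  fun u v => [&& u \in nbhd x, v \in nbhd x, u != v & ~~ adj G u v].

Definition co_component (x u : T) : {set T} := [set v | connect (co_adj x) u v].

Definition co_components (x : T) : {set {set T}} :=
  [set co_component x u | u in nbhd x].

End Graphs.

Definition is_cycle (T : finType) (r : rel T) (C : {set T}) : Prop :=
  exists s : seq T,
    [/\ uniq s, 3 <= size s, C = [set v in s] &
        {in C &, forall u v, r u v = (v == next s u) || (u == next s v)}].

(* Let k be the chromatic number.  For an edge ab, double-criticality gives a
   (k-2)-coloring of G - a - b in which every color class contains a common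
   neighbor of a and b: otherwise recoloring yields a (k-1)-coloring of G.
   For the edge xy this gives y at least k-2 common neighbors with x, so y has
   at most two non-neighbors in N(x): the complement of G_x has maximum degree 2.
   For the edge xa and a non-neighbor y of a in N(x), the common neighbor of x
   and a colored like y is a non-neighbor of y adjacent to a, so the
   complement has no vertex of degree 1; hence its components are isolated
   vertices and cycles.  In a 3- or 4-cycle that common neighbor is forced to
   be the cycle vertex opposite a, which either contradicts the degree bound or
   gives two adjacent vertices the same color.  Finally, if the complement had
   no edge, x and N(x) would form a clique on k+2 vertices. *)

From mathcomp Require Import all_boot zify.
Set Implicit Arguments. Unset Strict Implicit. Unset Printing Implicit Defensive.

Lemma next_neq_prev (X : eqType) (s : seq X) y :
  uniq s -> 2 < size s -> y \in s -> next s y != prev s y.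
Proof.
move=> us hs ys; apply/eqP => e.
have : next s (next s y) = y by rewrite e next_prev.
case: (rot_to ys) => i s' E.
have ur : uniq (y :: s') by rewrite -E rot_uniq.
have sz : 2 < size (y :: s') by rewrite -E size_rot.
rewrite -!(next_rot i us) E.
case: s' ur sz {E} => [|b [|c t]] //= ur _.
rewrite eqxx ifN_eqC; last by apply: contraNneq (andP ur).1 => <-; rewrite inE eqxx.
rewrite eqxx => ec; subst c.
by move: ur; rewrite !inE eqxx !orbT.
Qed.

Lemma exists_maximal_path (T : finType) (r : rel T) u :
  exists p, [/\ uniq (u :: p), path r u p &
                forall w, r (last u p) w -> w \in u :: p].
Proof.
suff ext n p : #|T| - size p <= n -> uniq (u :: p) -> path r u p ->
    exists p', [/\ uniq (u :: p'), path r u p' &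
                   forall w, r (last u p') w -> w \in u :: p'].
  by apply: (ext #|T| [::]); rewrite ?subn0.
have size_le (s : seq T) : uniq s -> size s <= #|T|.
  by move/card_uniqP <-; exact: max_card.
elim: n p => [|n IH] p hn up pp.
  exists p; split=> // w _; apply: contraT => pw.
  have /size_le /= : uniq (w :: u :: p) by rewrite cons_uniq pw up.
  (* [set] identifies syntactically different elaborations of #|T| and size p *)
  by move: hn; set N := #|T|; set m := size p; lia.
case: (pickP [pred w | r (last u p) w && (w \notin u :: p)]) => [w /andP [hw pw]|none].
  apply: (IH (rcons p w)); rewrite ?rcons_path ?pp ?hw -?rcons_cons ?rcons_uniq ?pw //.
  have /size_le /= : uniq (w :: u :: p) by rewrite cons_uniq pw up.
  by move: hn; rewrite size_rcons; set N := #|T|; set m := size p; lia.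
exists p; split=> // w hw; apply: contraT => pw.
by have := none w; rewrite /= hw pw.
Qed.

Lemma size_gt2 (X : eqType) (s : seq X) a b c :
  a \in s -> b \in s -> c \in s -> a != b -> a != c -> b != c -> 2 < size s.
Proof.
move=> sa sb sc ab ac bc; have := @uniq_leq_size _ [:: a; b; c] s; apply.
  by rewrite /= !inE negb_or ab ac bc.
by move=> z; rewrite !inE => /or3P [] /eqP ->.
Qed.

Lemma path_closing_cycle (T : eqType) (r : rel T) u p : path r u p ->
  cycle (fun a b => r a b || (a == last u p) && (b == u)) (u :: p).
Proof.
move=> pp; rewrite /= rcons_path (sub_path _ pp) => [|a b ->] //.
by rewrite !eqxx orbT.
Qed.

Lemma path_next (T : eqType) (r : rel T) u p y : path r u p ->
  y \in u :: p -> y != last u p -> r y (next (u :: p) y).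
Proof.
move=> pp yp yL; have := next_cycle (path_closing_cycle pp) yp.
by rewrite (negbTE yL) orbF.
Qed.

Lemma path_prev (T : eqType) (r : rel T) u p y : path r u p ->
  y \in u :: p -> y != u -> r (prev (u :: p) y) y.
Proof.
move=> pp yp yu; have := prev_cycle (path_closing_cycle pp) yp.
by rewrite (negbTE yu) andbF orbF.
Qed.

Section MaxDegreeTwo.
Variables (T : finType) (r : rel T).
Hypotheses (r_sym : symmetric r) (r_irr : irreflexive r).
Hypothesis r_deg_le2 : forall y, #|[set z | r y z]| <= 2.
Hypothesis r_no_leaf : forall y z, r y z -> exists2 w, r y w & w != z.

Lemma neighbors_collide y a b c :
  r y a -> r y b -> r y c -> [|| a == b, a == c | b == c].
Proof.
move=> ya yb yc; apply: contraTT (r_deg_le2 y) => /norP [ab /norP [ac bc]].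
have sub : [set a; b; c] \subset [set z | r y z].
  by apply/subsetP => z; rewrite !inE => /orP [/orP [] |] /eqP ->.
rewrite -ltnNge; apply: leq_trans (subset_leq_card sub).
by rewrite -setUA cardsU1 cards2 !inE negb_or ab ac bc.
Qed.

Lemma cycle_neighbors s y z : uniq s -> 2 < size s -> cycle r s -> y \in s ->
  r y z -> (z == next s y) || (z == prev s y).
Proof.
move=> us sz cs ys yz; have y_prev : r y (prev s y) by rewrite r_sym prev_cycle.
have := neighbors_collide (next_cycle cs ys) y_prev yz.
by rewrite (negbTE (next_neq_prev us sz ys)) /= => /orP [] /eqP ->; rewrite eqxx ?orbT.
Qed.

Lemma cycle_connectE s u : uniq s -> 2 < size s -> cycle r s -> u \in s ->
  [set w | connect r u w] = [set w in s].
Proof.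
move=> us sz cs us'; apply/setP => w; rewrite !inE; apply/idP/idP => [|ws].
  have cl : closed r (mem s).
    apply: (intro_closed (sym_connect_sym r_sym)) => y z yz ys.
    by case/orP: (cycle_neighbors us sz cs ys yz) => /eqP ->; rewrite ?mem_next ?mem_prev.
  by move/(closed_connect cl) <-.
exact: connect_cycle cs _ _ us' ws.
Qed.

Lemma cycle_through u v : r u v ->
  exists s, [/\ uniq s, 2 < size s, cycle r s & u \in s].
Proof.
move=> uv; have [p [us pp maxp]] := exists_maximal_path r u.
case/lastP: p us pp maxp => [|q L] us pp; rewrite ?last_rcons => maxp.
  by have := maxp v uv; rewrite inE => /eqP vu; rewrite vu r_irr in uv.
set s := u :: rcons q L in us maxp *.
have Ls : L \in s by rewrite inE mem_rcons mem_head orbT.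
have uL : u != L by apply: contraNneq (andP us).1 => ->; rewrite mem_rcons mem_head.
have next_L : next s L = u.
  by have := cycle_next us; rewrite {2}/s /= rcons_path last_rcons => /andP [_ /eqP].
have L_prev : r L (prev s L).
  by rewrite r_sym (path_prev pp) // eq_sym.
have prev_L : prev s L != L by apply: contraTneq L_prev => ->; rewrite r_irr.
have [w Lw w_prev] := r_no_leaf L_prev.
have ws := maxp w Lw.
have wL : w != L by apply: contraTneq Lw => ->; rewrite r_irr.
(* otherwise w would have three neighbors: its two path neighbors and L *)
have wu : w = u.
  apply/eqP; apply: contraT => wu.
  have sz : 2 < size s by apply: (size_gt2 (mem_head u _) Ls ws); rewrite // eq_sym.
  have w_next : r w (next s w) by rewrite (path_next pp) ?last_rcons.
  have w_prev' : r w (prev s w) by rewrite r_sym (path_prev pp).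
  have wL' : r w L by rewrite r_sym.
  have := neighbors_collide w_next w_prev' wL'.
  rewrite (negbTE (next_neq_prev us sz ws)) orFb => /orP [] /eqP e.
  - by move: w_prev; rewrite -e prev_next // eqxx.
  - by move: wu; rewrite -(next_prev us w) e next_L eqxx.
subst w; exists s; split=> //; last by rewrite /s /= rcons_path pp last_rcons.
by apply: (size_gt2 (mem_head u _) Ls (_ : prev s L \in s)); rewrite ?mem_prev // eq_sym.
Qed.

Lemma is_cycle_component u v : r u v -> is_cycle r [set w | connect r u w].
Proof.
case/cycle_through => s [us sz cs su].
rewrite (cycle_connectE us sz cs su); exists s; split=> // a b; rewrite !inE => sa sb.
apply/idP/idP => [ab|/orP [] /eqP ->]; last 2 first.
- exact: next_cycle.
- by rewrite r_sym next_cycle.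
case/orP: (cycle_neighbors us sz cs sa ab) => /eqP ->; first by rewrite eqxx.
by rewrite next_prev // eqxx orbT.
Qed.

End MaxDegreeTwo.

Lemma connect_isolated (T : finType) (r : rel T) u :
  (forall v, ~~ r u v) -> [set w | connect r u w] = [set u].
Proof.
move=> iso; apply/setP => w; rewrite !inE; apply/idP/eqP => [|->]; last exact: connect0.
by case/connectP => [[|v p] //= /andP [uv _]]; rewrite (negbTE (iso v)) in uv.
Qed.

Lemma is_cycle_card_ge5 (T : finType) (r : rel T) C :
  (forall a b c, r a b -> r b c -> r c a -> False) ->
  (forall a b c d, r a b -> r b c -> r c d -> r d a -> a != c -> b != d ->
     ~~ r b d -> False) ->
  is_cycle r C -> 5 <= #|C|.
Proof.
move=> no3 no4 [s [us sz -> rE]]; rewrite cardsE (card_uniqP us).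
have {}rE a b : a \in s -> b \in s -> r a b = (b == next s a) || (a == next s b).
  by move=> sa sb; apply: rE; rewrite inE.
have r_next a : a \in s -> r a (next s a) by move=> sa; rewrite rE ?mem_next ?eqxx.
have := cycle_next us; have := r_next; have := rE.
case: s us sz {rE r_next} => [|a [|b [|c [|d [|e t]]]]] // us _ rE r_next.
- case/and4P => /eqP nab /eqP nbc /eqP nca _.
  case: (no3 a b c); [rewrite -nab | rewrite -nbc | rewrite -nca];
    by rewrite r_next // !inE eqxx ?orbT.
- case/and5P => /eqP nab /eqP nbc /eqP ncd /eqP nda _.
  move: us; rewrite /= !inE !negb_or => /and4P [/and3P [ab ac _] /andP [_ bd] cd _].
  have [sa sb sc sd] : [/\ a \in [:: a; b; c; d], b \in [:: a; b; c; d],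
                           c \in [:: a; b; c; d] & d \in [:: a; b; c; d]].
    by rewrite !inE !eqxx /= ?orbT.
  case: (no4 a b c d) => //; [rewrite -nab | rewrite -nbc | rewrite -ncd | rewrite -nda
    | rewrite rE // nbc nda (eq_sym d) (negbTE cd) (eq_sym b) (negbTE ab) //]; exact: r_next.
Qed.

Lemma mem_setC2 (T : finType) (u a b : T) : u != a -> u != b -> u \in ~: [set a; b].
Proof. by move=> ua ub; rewrite !inE negb_or ua ub. Qed.

Section Coloring.
Variables (T : finType) (G : sgraph T).

Lemma adj_neq a b : adj G a b -> a != b.
Proof. by apply: contraTneq => ->; rewrite adj_irrefl. Qed.

Definition proper_on (S : {set T}) n (f : T -> 'I_n) :=
  {in S &, forall u v, adj G u v -> f u != f v}.

Lemma colorableP (S : {set T}) n :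
  reflect (exists f : {ffun T -> 'I_n}, proper_on S f) (colorable G S n).
Proof.
apply: (iffP existsP) => [[f /forallP f_proper]|[f f_proper]]; exists f.
  move=> u v uS vS; move: (f_proper u) => /implyP/(_ uS)/forallP/(_ v).
  by move=> /implyP/(_ vS)/implyP.
apply/forallP => u; apply/implyP => uS; apply/forallP => v; apply/implyP => vS.
exact/implyP/f_proper.
Qed.

Lemma colorable_chi (S : {set T}) : colorable G S (chi G S).
Proof. by rewrite /chi; case: ex_minnP. Qed.

Lemma chi_min (S : {set T}) n : colorable G S n -> chi G S <= n.
Proof. by rewrite /chi; case: ex_minnP => m _; apply. Qed.

Lemma colorable_nat (S : {set T}) n (g : T -> nat) : (forall u, g u < n) ->
  {in S &, forall u v, adj G u v -> g u != g v} -> colorable G S n.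
Proof.
move=> g_lt g_proper; apply/colorableP; exists [ffun u => Ordinal (g_lt u)].
by move=> u v uS vS uv; rewrite !ffunE; exact: g_proper.
Qed.

Lemma clique_card_le_chromatic (K : {set T}) :
  {in K &, forall a b, a != b -> adj G a b} -> #|K| <= chromatic G.
Proof.
move=> K_clique; have /colorableP [f f_proper] := colorable_chi [set: T].
have f_inj : {in K &, injective f}.
  move=> a b aK bK fab; apply/eqP; apply: contraT => ab.
  by have := f_proper a b (in_setT a) (in_setT b) (K_clique a b aK bK ab); rewrite fab eqxx.
by rewrite -(card_in_imset f_inj); apply: leq_trans (max_card _) _; rewrite card_ord.
Qed.

Lemma chromatic_ge2 a b : adj G a b -> 2 <= chromatic G.
Proof.
move=> ab; have := cards2 a b; rewrite (adj_neq ab) => <-.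
apply: clique_card_le_chromatic.
move=> u v; rewrite !inE => /orP [] /eqP -> /orP [] /eqP ->; rewrite ?eqxx //.
by rewrite adj_sym.
Qed.

Lemma colorable_setD1 (S : {set T}) v n : colorable G (S :\ v) n -> colorable G S n.+1.
Proof.
case/colorableP => f f_proper.
apply: (@colorable_nat _ _ (fun u => if u == v then n else f u)).
  by move=> u; case: ifP => _; rewrite // ltnS ltnW.
move=> u w uS wS uw.
case: (eqVneq u v) => [eu|uv]; case: (eqVneq w v) => [ew|wv].
- by rewrite eu ew adj_irrefl in uw.
- by rewrite eq_sym ltn_eqF.
- by rewrite ltn_eqF.
- by apply: f_proper; rewrite ?inE ?uv ?wv.
Qed.

Lemma chromatic_le_chi_del2 x y : chromatic G <= (chi G (~: [set x; y])).+2.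
Proof.
apply/chi_min/(@colorable_setD1 _ x)/(@colorable_setD1 _ y).
have -> : [set: T] :\ x :\ y = ~: [set x; y].
  by apply/setP => u; rewrite !inE negb_or andbT andbC.
exact: colorable_chi.
Qed.

Lemma common_neighbor_of_color x y m (f : T -> 'I_m) i :
  adj G x y -> proper_on (~: [set x; y]) f -> m.+1 < chromatic G ->
  exists w, [&& adj G x w, adj G y w & f w == i].
Proof.
move=> xy f_proper m_lt.
case: (pickP [pred w | [&& adj G x w, adj G y w & f w == i]]) => [w wP|none].
  by exists w.
suff : chromatic G <= m.+1 by rewrite leqNgt m_lt.
(* otherwise color x with [i], and y and the [i]-colored neighbors of x with a new color *)
pose moved u := (u == y) || (f u == i) && adj G x u.
pose g u := if u == x then nat_of_ord i else if moved u then m else nat_of_ord (f u).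
have g_lt u : g u < m.+1.
  by rewrite /g; case: ifP => _; [|case: ifP => _]; rewrite // ltnS ltnW.
apply: chi_min; apply: (colorable_nat g_lt).
have g_x u : adj G x u -> g u != g x.
  move=> xu; rewrite /g eqxx (ifN_eqC _ _ (adj_neq xu)) /moved xu andbT.
  case: ifP => [_|/norP [_ fi]]; [by rewrite eq_sym ltn_eqF | exact: fi].
have g_y u : u != x -> adj G y u -> g u != g y.
  move=> ux yu; rewrite /g (negbTE ux) (ifN_eqC _ _ (adj_neq xy)) /moved eqxx /=.
  have /negbTE -> : ~~ ((f u == i) && adj G x u).
    by apply/negP => /andP [fi xu]; have := none u; rewrite /= xu yu fi.
  by rewrite orbF (ifN_eqC _ _ (adj_neq yu)) ltn_eqF.
have g_rest u v : u != x -> u != y -> v != x -> v != y -> adj G u v -> g u != g v.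
  move=> ux uy vx vy uv; have := f_proper u v (mem_setC2 ux uy) (mem_setC2 vx vy) uv.
  rewrite /g (negbTE ux) (negbTE vx) /moved (negbTE uy) (negbTE vy) /=.
  case: (f u =P i) => [->|_]; case: (f v =P i) => [->|_] //=; rewrite ?eqxx //.
  - by case: ifP => _ ne //; rewrite eq_sym ltn_eqF.
  - by case: ifP => _ ne //; rewrite ltn_eqF.
move=> u v _ _ uv.
case: (eqVneq u x) uv => [-> xv|ux uv]; first by rewrite eq_sym g_x.
case: (eqVneq v x) uv => [-> ux'|vx uv]; first by rewrite g_x // adj_sym.
case: (eqVneq u y) uv => [-> yv|uy uv]; first by rewrite eq_sym g_y.
case: (eqVneq v y) uv => [-> uy'|vy uv]; first by rewrite g_y // adj_sym.
exact: g_rest.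
Qed.

End Coloring.

Lemma co_adjE (T : finType) (G : sgraph T) x u v :
  co_adj G x u v = [&& adj G x u, adj G x v, u != v & ~~ adj G u v].
Proof. by rewrite /co_adj !inE. Qed.

Lemma co_adj_sym (T : finType) (G : sgraph T) x : symmetric (co_adj G x).
Proof.
by move=> u v; rewrite !co_adjE [u == v]eq_sym [adj G u v]adj_sym andbCA.
Qed.

Lemma co_adj_irrefl (T : finType) (G : sgraph T) x : irreflexive (co_adj G x).
Proof. by move=> u; rewrite co_adjE eqxx !andbF. Qed.

Lemma co_adj_neq (T : finType) (G : sgraph T) x u v : co_adj G x u v -> u != v.
Proof. by apply: contraTneq => ->; rewrite co_adj_irrefl. Qed.

Section DoubleCritical.
Variables (T : finType) (G : sgraph T) (x : T).
Hypothesis edge_critical :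
  forall a b, adj G a b -> chi G (~: [set a; b]) <= chromatic G - 2.

Lemma edge_deleted_coloring a b : adj G a b ->
  exists m (f : T -> 'I_m), proper_on G (~: [set a; b]) f /\ m.+2 = chromatic G.
Proof.
move=> ab; have /colorableP [f f_proper] := colorable_chi G (~: [set a; b]).
exists (chi G (~: [set a; b])), f; split=> //.
have := edge_critical ab; have := chromatic_le_chi_del2 G a b.
have := chromatic_ge2 ab; lia.
Qed.

Lemma co_neighbor_same_color a y m (f : T -> 'I_m) :
  adj G x a -> proper_on G (~: [set x; a]) f -> m.+2 = chromatic G ->
  co_adj G x a y -> exists2 w, co_adj G x y w & adj G a w && (f w == f y).
Proof.
move=> xa f_proper m_chi; rewrite co_adjE => /and4P [_ xy ay not_ay].
have m_lt : m.+1 < chromatic G by rewrite -m_chi.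
have [w /and3P [xw aw /eqP fw]] := common_neighbor_of_color (f y) xa f_proper m_lt.
exists w; last by rewrite aw fw eqxx.
have yw : y != w by apply: contraNneq not_ay => ->.
rewrite co_adjE xy xw yw; apply/negP => yw_adj.
have yD : y \in ~: [set x; a] by apply: mem_setC2; rewrite eq_sym ?(adj_neq xy).
have wD : w \in ~: [set x; a].
  by apply: mem_setC2; rewrite eq_sym ?(adj_neq xw) ?(adj_neq aw).
by have := f_proper y w yD wD yw_adj; rewrite fw eqxx.
Qed.

Lemma co_adj_no_leaf y z : co_adj G x y z -> exists2 w, co_adj G x y w & w != z.
Proof.
rewrite co_adj_sym => zy; have xz : adj G x z by move: zy; rewrite co_adjE => /andP [].
have [m [f [f_proper m_chi]]] := edge_deleted_coloring xz.
have [w yw /andP [zw _]] := co_neighbor_same_color xz f_proper m_chi zy.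
by exists w; rewrite // eq_sym (adj_neq zw).
Qed.

Section HighDegree.
Hypothesis deg_x : deg G x = (chromatic G).+1.

Lemma co_deg_le2 y : #|[set z | co_adj G x y z]| <= 2.
Proof.
have [xy|not_xy] := boolP (adj G x y); last first.
  rewrite (_ : [set z | _] = set0) ?cards0 //.
  by apply/setP => z; rewrite !inE co_adjE (negbTE not_xy).
have [m [f [f_proper m_chi]]] := edge_deleted_coloring xy.
have m_lt : m.+1 < chromatic G by rewrite -m_chi.
set common := nbhd G x :&: nbhd G y.
have m_le : m <= #|common|.
  have : [set: 'I_m] \subset f @: common.
    apply/subsetP => i _.
    have [w /and3P [xw yw /eqP <-]] := common_neighbor_of_color i xy f_proper m_lt.
    by apply: imset_f; rewrite !inE xw yw.
  move/subset_leq_card; rewrite cardsT card_ord => /leq_trans; apply.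
  exact: leq_imset_card.
have sub : [set z | co_adj G x y z] \subset nbhd G x :\: (y |: common).
  apply/subsetP => z; rewrite !inE co_adjE => /and4P [_ xz yz not_yz].
  by rewrite xz negb_or eq_sym yz (negbTE not_yz) andbF.
apply: leq_trans (subset_leq_card sub) _.
rewrite cardsD (setIidPr _); last first.
  by apply/subsetP => z; rewrite !inE => /orP [/eqP -> | /andP []].
rewrite cardsU1 !inE adj_irrefl andbF /= -/(deg G x) deg_x.
by move: m_le; set c := #|common|; lia.
Qed.

Lemma co_triangle_free a b c :
  co_adj G x a b -> co_adj G x b c -> co_adj G x c a -> False.
Proof.
move=> ab bc ca; have xa : adj G x a by move: ab; rewrite co_adjE => /andP [].
have [m [f [f_proper m_chi]]] := edge_deleted_coloring xa.
have [w bw /andP [aw _]] := co_neighbor_same_color xa f_proper m_chi ab.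
rewrite co_adj_sym in ab.
case/or3P: (neighbors_collide co_deg_le2 ab bc bw) => /eqP ew.
- by rewrite ew co_adj_irrefl in ca.
- by rewrite ew adj_irrefl in aw.
- by move: ca; rewrite co_adjE ew [adj G w a]adj_sym aw !andbF.
Qed.

Lemma co_square_free a b c d :
  co_adj G x a b -> co_adj G x b c -> co_adj G x c d -> co_adj G x d a ->
  a != c -> b != d -> ~~ co_adj G x b d -> False.
Proof.
move=> ab bc cd da ac bd not_bd.
have := ab; rewrite co_adjE => /and3P [xa xb _].
have xd : adj G x d by move: da; rewrite co_adjE => /andP [].
have [m [f [f_proper m_chi]]] := edge_deleted_coloring xa.
have [w1 bw1 /andP [aw1 /eqP fw1]] := co_neighbor_same_color xa f_proper m_chi ab.
have ad : co_adj G x a d by rewrite co_adj_sym.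
have [w2 dw2 /andP [aw2 /eqP fw2]] := co_neighbor_same_color xa f_proper m_chi ad.
have only_c y w : co_adj G x y a -> co_adj G x y c -> co_adj G x y w -> adj G a w -> w = c.
  move=> ya yc yw aw; case/or3P: (neighbors_collide co_deg_le2 ya yc yw) => /eqP // e.
  - by rewrite e eqxx in ac.
  - by rewrite e adj_irrefl in aw.
(* the common neighbors of x and a colored like b and like d are both c *)
have w1c : w1 = c by apply: (only_c _ _ _ bc bw1 aw1); rewrite co_adj_sym.
have w2c : w2 = c by apply: (only_c _ _ da _ dw2 aw2); rewrite co_adj_sym.
have bd_adj : adj G b d by move: not_bd; rewrite co_adjE xb xd bd /= negbK.
have bD : b \in ~: [set x; a].
  by apply: mem_setC2; rewrite eq_sym ?(adj_neq xb) ?(co_adj_neq ab).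
have dD : d \in ~: [set x; a].
  by apply: mem_setC2; rewrite eq_sym ?(adj_neq xd) ?(co_adj_neq ad).
by have := f_proper b d bD dD bd_adj; rewrite -fw1 -fw2 w1c w2c eqxx.
Qed.

Lemma exists_co_edge : exists u v, co_adj G x u v.
Proof.
have : [exists u, exists v, co_adj G x u v]; last first.
  by case/existsP => u /existsP [v uv]; exists u, v.
apply: contraT => /existsPn no_co_edge.
have K_clique : {in x |: nbhd G x &, forall a b, a != b -> adj G a b}.
  move=> a b; rewrite !inE => /orP [/eqP -> | xa] /orP [/eqP -> | xb] ab //.
  - by rewrite eqxx in ab.
  - by rewrite adj_sym.
  - by move/existsPn/(_ b): (no_co_edge a); rewrite co_adjE xa xb ab /= negbK.
have := clique_card_le_chromatic K_clique.
by rewrite cardsU1 inE adj_irrefl -/(deg G x) deg_x; lia.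
Qed.

End HighDegree.

End DoubleCritical.

Theorem proposition14 (T : finType) (G : sgraph T) (k : nat) (x : T) :
  ~ complete G ->
  double_critical G ->
  chromatic G = k ->
  deg G x = k.+1 ->
  [/\ (forall C, C \in co_components G x ->
         #|C| = 1 \/ is_cycle (co_adj G x) C),
      (exists2 C, C \in co_components G x & is_cycle (co_adj G x) C) &
      (forall C, C \in co_components G x ->
         is_cycle (co_adj G x) C -> 5 <= #|C|)].
Proof.
move=> _ [_ edge_critical] <- deg_x.
have co_cycle u v : co_adj G x u v -> is_cycle (co_adj G x) (co_component G x u).
  apply: is_cycle_component; [exact: co_adj_sym | exact: co_adj_irrefl |
    exact: co_deg_le2 edge_critical deg_x | exact: co_adj_no_leaf edge_critical].
split.
- move=> _ /imsetP [u _ ->].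
  case: (pickP (co_adj G x u)) => [v uv | isolated]; first by right; exact: co_cycle uv.
  by left; rewrite /co_component connect_isolated ?cards1 // => v; rewrite isolated.
- have [u [v uv]] := exists_co_edge deg_x.
  exists (co_component G x u); last exact: co_cycle uv.
  by apply: imset_f; move: uv; rewrite co_adjE inE => /andP [].
- move=> C _; apply: is_cycle_card_ge5; first exact: co_triangle_free edge_critical deg_x.
  exact: co_square_free edge_critical deg_x.
Qed.
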